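(* If a hard-core configuration $\sigma\in\mathcal{X}$ satisfies $\Delta H(\sigma)<L$, then there exists a path $\omega:\sigma\to\{\mathrm{e},\mathrm{o}\}$ with $\Phi_\omega\le H(\sigma)+1$. In particular, either $\sigma\in C_{\mathrm{e}}$ or $\sigma\in C_{\mathrm{o}}$.
   Context: $L\ge6$ even; $\Lambda=(V,E)$ is the $L\times L$ toric grid graph ($V=\{0,\dots,L-1\}^2$, adjacency = difference $\pm1$ mod $L$ in exactly one coordinate); even/odd sites by parity of coordinate sum. $\mathcal{X}=\{\sigma\in\{0,1\}^V:\sigma(v)\sigma(w)=0$ for adjacent $v,w\}$, $H(\sigma)=-\sum_v\sigma(v)$; $\mathrm{e}$ ($\mathrm{o}$) is the configuration with particles exactly on the even (odd) sites, $H(\mathrm{e})=H(\mathrm{o})=-L^2/2$, and $\Delta H(\sigma)=H(\sigma)-H(\mathrm{e})$. A path is a finite sequence of configurations in $\mathcal{X}$ in which consecutive configurations differ at exactly one site; its height is $\Phi_\omega=\max_{\eta\in\omega}H(\eta)$; a path $\sigma\to\{\mathrm{e},\mathrm{o}\}$ ends in $\mathrm{e}$ or $\mathrm{o}$. $\Phi(\sigma,\sigma')=\min_{\omega:\sigma\to\sigma'}\Phi_\omega$. It is known that $\Phi(\mathrm{e},\mathrm{o})-H(\mathrm{e})=L+1$. The initial cycles are $C_{\mathrm{e}}=\{\zeta\in\mathcal{X}:\Phi(\zeta,\mathrm{e})<\Phi(\mathrm{e},\mathrm{o})\}$ and $C_{\mathrm{o}}=\{\zeta\in\mathcal{X}:\Phi(\zeta,\mathrm{o})<\Phi(\mathrm{e},\mathrm{o})\}$.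 *)

From mathcomp Require Import all_boot all_order all_algebra.
Set Implicit Arguments. Unset Strict Implicit. Unset Printing Implicit Defensive.
Import Order.TTheory GRing.Theory Num.Theory.
Local Open Scope ring_scope.

Section HardCore.
Variable L : nat.

Definition site := ('I_L * 'I_L)%type.

Definition cyc_adj (i i' : 'I_L) : bool :=
  (((i + 1) %% L)%N == i') || (((i' + 1) %% L)%N == i).

Definition adj (v w : site) : bool :=
  ((v.1 == w.1) && cyc_adj v.2 w.2) || ((v.2 == w.2) && cyc_adj v.1 w.1).

Definition config := {ffun site -> bool}.

Definition hardcore (s : config) : bool :=
  [forall v, forall w, adj v w ==> ~~ (s v && s w)].

Definition Hc (s : config) : int := - (#|[set v | s v]|%:Z).

Definition conf_e : config := [ffun v : site => ~~ odd (v.1 + v.2)%N].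
Definition conf_o : config := [ffun v : site => odd (v.1 + v.2)%N].

Definition DeltaH (s : config) : int := Hc s - Hc conf_e.

Definition one_flip (s t : config) : bool := #|[set v | s v != t v]| == 1%N.

(* a path is given as  a :: p  (non-empty sequence) *)
Definition is_path (a : config) (p : seq config) : Prop :=
  all hardcore (a :: p) /\ path one_flip a p.

Definition path_from_to (a : config) (p : seq config) (b : config) : Prop :=
  is_path a p /\ last a p = b.

Definition height (a : config) (p : seq config) : int :=
  foldr (fun x m => Num.max (Hc x) m) (Hc a) p.

(* Phi(zeta, b) < Phi(e, o), unfolding Phi as a minimum over paths:
   some path zeta -> b has height strictly below that of every path e -> o *)
Definition Phi_lt_Phi_eo (z b : config) : Prop :=
  exists p, path_from_to z p b /\
    forall q, path_from_to conf_e q conf_o -> height z p < height conf_e q.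

Definition C_e (z : config) : Prop := hardcore z /\ Phi_lt_Phi_eo z conf_e.
Definition C_o (z : config) : Prop := hardcore z /\ Phi_lt_Phi_eo z conf_o.

(* Known fact: Phi(e,o) - H(e) = L + 1, with Phi(e,o) the minimal height *)
Definition Phi_eo_value : Prop :=
  (exists q, path_from_to conf_e q conf_o /\ height conf_e q = Hc conf_e + (L + 1)%:Z) /\
  (forall q, path_from_to conf_e q conf_o -> Hc conf_e + (L + 1)%:Z <= height conf_e q).

End HardCore.

(* Since DeltaH(s) < L, s has more than L (L/2 - 1) particles, so some row
   carries L/2 of them; a maximum independent set of the even cycle C_L
   alternates, so that row agrees with e or with o, say with e.  Now grow e
   row by row: if row r agrees with e and row r+1 does not, an even site x of
   row r+1 is empty and all its neighbours are empty except possibly the odd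
   one in row r+2.  Removing that particle and then adding one at x never
   raises the energy above H(s) + 1 and strictly reduces the disagreement
   with e.  The resulting path stays below H(e) + L + 1 = Phi(e, o). *)

From mathcomp Require Import all_boot all_order all_algebra.
From mathcomp Require Import zify.
Import Order.TTheory GRing.Theory Num.Theory.
Set Implicit Arguments. Unset Strict Implicit. Unset Printing Implicit Defensive.

Section Cycle.
Variable L : nat.

Lemma sum_ordS (F : 'I_L -> nat) : \sum_j F (ordS j) = \sum_j F j.
Proof. by rewrite [RHS](reindex_inj (@ordS_inj L)). Qed.

Lemma sum_ordS_pairs (F : 'I_L -> nat) : \sum_j (F j + F (ordS j)) = 2 * \sum_j F j.
Proof. by rewrite big_split /= sum_ordS addnn mul2n. Qed.

Lemma sum1_ord : \sum_(j < L) 1 = L.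
Proof. by rewrite sum1_card card_ord. Qed.

Lemma cycle_boundary (P : pred 'I_L) i j : P i -> ~~ P j -> exists2 k, P k & ~~ P (ordS k).
Proof.
move=> Pi notPj; apply/exists_inP; apply: contraNT notPj => /exists_inPn closedP.
have iterP n : P (iter n (@ordS L) i).
  by elim: n => //= n IH; move: (closedP _ IH); rewrite negbK.
have val_iter n : iter n (@ordS L) i = (i + n) %% L :> nat.
  elim: n => [|n IH] /=; first by rewrite addn0 modn_small.
  by rewrite -addn1 IH modnDml addn1 addnS.
suff -> : j = iter (j + (L - i)) (@ordS L) i by [].
apply: val_inj => /=; rewrite val_iter addnCA subnKC; last exact: ltnW.
by rewrite modnDr modn_small.
Qed.

Variable f : 'I_L -> bool.

Lemma cycle_indep_bound : (forall j, ~~ (f j && f (ordS j))) -> 2 * \sum_j f j <= L.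
Proof.
move=> indep; rewrite -sum_ordS_pairs -[X in _ <= X]sum1_ord.
by apply: leq_sum => j _; move: (indep j); case: (f j); case: (f (ordS j)).
Qed.

Lemma cycle_indep_extremal : (forall j, ~~ (f j && f (ordS j))) ->
  2 * \sum_j f j = L -> forall j, f (ordS j) = ~~ f j.
Proof.
move=> indep sum_f.
have pair_le1 j : f j + f (ordS j) <= 1 ?= iff (f j + f (ordS j) == 1).
  by apply/leqif_eq; move: (indep j); case: (f j); case: (f (ordS j)).
have := (leqif_sum (fun j (_ : true) => pair_le1 j)).2.
rewrite sum_ordS_pairs sum_f sum1_ord eqxx => /esym/forall_inP pairs1 j.
by move: (pairs1 j isT); case: (f j); case: (f (ordS j)).
Qed.

Lemma alternating_cycle_sum : (forall j, f (ordS j) = ~~ f j) -> 2 * \sum_j f j = L.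
Proof.
move=> alt; rewrite -sum_ordS_pairs -[RHS]sum1_ord.
by apply: eq_bigr => j _; rewrite alt; case: (f j).
Qed.

Lemma alternating_parity : (forall j, f (ordS j) = ~~ f j) ->
  exists c, forall j : 'I_L, f j = c (+) odd j.
Proof.
move=> alt; case: (posnP L) => [L0 | L_gt0].
  by exists false => j; exfalso; move: (ltn_ord j); rewrite [X in _ < X]L0.
exists (f (Ordinal L_gt0)) => -[k lt_kL]; elim: k lt_kL => [|k IH] lt_kL.
  by rewrite addbF; congr f; apply: val_inj.
have lt_k : k < L by exact: ltnW.
have -> : Ordinal lt_kL = ordS (Ordinal lt_k) by apply: val_inj; rewrite /= modn_small.
by rewrite alt IH /= modn_small // addbN.
Qed.

End Cycle.

Section Paths.
Variable L : nat.
Implicit Types (s t u : config L) (p : seq (config L)) (M : int).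

Definition reachable_below M s t := exists p, path_from_to s p t /\ (height s p <= M)%R.

Lemma height_le s p M : (height s p <= M)%R = all (fun x => Hc x <= M)%R (s :: p).
Proof.
elim: p => [|x p IH] /=; first by rewrite andbT.
by rewrite ge_max IH andbCA.
Qed.

Lemma reachable_below_refl M s : hardcore s -> (Hc s <= M)%R -> reachable_below M s s.
Proof. by move=> hs le_M; exists [::]; rewrite height_le /= le_M /path_from_to /is_path /= hs. Qed.

Lemma reachable_below_flip M s t : hardcore s -> hardcore t -> one_flip s t ->
  (Hc s <= M)%R -> (Hc t <= M)%R -> reachable_below M s t.
Proof.
move=> hs ht flip le_s le_t; exists [:: t].
by rewrite height_le /= le_s le_t /path_from_to /is_path /= hs ht flip.
Qed.

Lemma reachable_below_trans M s t u :
  reachable_below M s t -> reachable_below M t u -> reachable_below M s u.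
Proof.
move=> [p [[[hc_p path_p] last_p] height_p]] [q [[[hc_q path_q] last_q] height_q]].
have [_ hc_q'] := andP hc_q; move: height_q; rewrite height_le /= => /andP[_ height_q].
exists (p ++ q); split; first split; first split.
- by rewrite -cat_cons all_cat hc_p.
- by rewrite cat_path path_p last_p.
- by rewrite last_cat last_p.
- by rewrite height_le -cat_cons all_cat -height_le height_p.
Qed.

End Paths.

Section Torus.
Variable L : nat.
Hypothesis L_even : ~~ odd L.
Implicit Types (s t : config L) (v w : site L) (b : bool).

Lemma cyc_adjE (i j : 'I_L) : cyc_adj i j = (ordS i == j) || (ordS j == i).
Proof. by rewrite /cyc_adj -!val_eqE /= !addn1. Qed.

Lemma cyc_adj_sym (i j : 'I_L) : cyc_adj i j = cyc_adj j i.
Proof. by rewrite /cyc_adj orbC. Qed.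

Lemma adj_sym v w : adj v w = adj w v.
Proof. by rewrite /adj (cyc_adj_sym v.1) (cyc_adj_sym v.2) (eq_sym v.1) (eq_sym v.2). Qed.

Lemma adj_ordS2 (i j : 'I_L) : adj (i, j) (i, ordS j).
Proof. by rewrite /adj cyc_adjE /= !eqxx. Qed.

Lemma adj_ordS1 (i j : 'I_L) : adj (i, j) (ordS i, j).
Proof. by rewrite /adj !cyc_adjE /= !eqxx !orbT. Qed.

Lemma odd_ordS (i : 'I_L) : odd (ordS i) = ~~ odd i.
Proof.
have := ltn_ord i; rewrite leq_eqVlt => /orP[/eqP iS_eq_L | lt_iS].
  by rewrite /= iS_eq_L modnn; move: L_even; rewrite -[X in odd X]iS_eq_L /= negbK => ->.
by rewrite /= modn_small.
Qed.

Lemma odd_cyc_adj (i j : 'I_L) : cyc_adj i j -> odd j = ~~ odd i.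
Proof. by rewrite cyc_adjE => /orP[] /eqP <-; rewrite odd_ordS ?negbK. Qed.

Definition checker b : config L := [ffun v : site L => odd (v.1 + v.2) (+) b].

Lemma conf_eE : conf_e L = checker true.
Proof. by apply/ffunP => v; rewrite !ffunE addbT. Qed.

Lemma conf_oE : conf_o L = checker false.
Proof. by apply/ffunP => v; rewrite !ffunE addbF. Qed.

Lemma checker_adj b v w : adj v w -> checker b w = ~~ checker b v.
Proof.
rewrite !ffunE !oddD => /orP[] /andP[/eqP-> /odd_cyc_adj->];
  by case: (odd _); case: (odd _); case: b.
Qed.

Lemma adj_irrefl v : ~~ adj v v.
Proof. by apply/negP => /(checker_adj true); case: (checker true v). Qed.

Lemma hardcoreP s : reflect (forall v w, adj v w -> ~~ (s v && s w)) (hardcore s).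
Proof.
apply: (iffP forallP) => [hs v w | hs v]; first exact: (implyP (forallP (hs v) w)).
by apply/forallP => w; apply/implyP; apply: hs.
Qed.

Lemma hardcore_adj s v w : hardcore s -> adj v w -> s v -> ~~ s w.
Proof. by move=> /hardcoreP hs /hs; case: (s v). Qed.

Definition row_count s i := \sum_(j < L) s (i, j).

Lemma card_particles s : #|[set v | s v]| = \sum_i row_count s i.
Proof.
rewrite pair_bigA -sum1_card big_mkcond /=.
by apply: eq_bigr => -[i j] _; rewrite inE; case: (s (i, j)).
Qed.

Lemma row_count_le s i : hardcore s -> 2 * row_count s i <= L.
Proof.
move=> hs; apply: cycle_indep_bound => j.
by apply/negP => /andP[/(hardcore_adj hs (adj_ordS2 i j))/negP].
Qed.

Lemma row_count_checker b i : 2 * row_count (checker b) i = L.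
Proof. by apply: alternating_cycle_sum => j; apply: checker_adj; apply: adj_ordS2. Qed.

Lemma exists_max_row s : hardcore s -> (DeltaH s < L%:Z)%R ->
  exists i, 2 * row_count s i = L.
Proof.
move=> hs lt_D; suff /existsP[i /eqP] : [exists i, 2 * row_count s i == L] by exists i.
apply: contraTT lt_D; rewrite negb_exists => /forallP no_max.
have lt_rows i : row_count s i < row_count (checker true) i.
  by have := row_count_le i hs; have := row_count_checker true i; have := no_max i; lia.
have : \sum_i (row_count s i + 1) <= \sum_i row_count (checker true) i.
  by apply: leq_sum => i _; rewrite addn1.
rewrite big_split /= sum1_ord -!card_particles -conf_eE /DeltaH /Hc; lia.
Qed.

Definition full_row b s i := [forall j, checker b (i, j) ==> s (i, j)].

Lemma max_row_full s i : hardcore s -> 2 * row_count s i = L -> exists b, full_row b s i.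
Proof.
move=> hs max_i; pose f j := s (i, j).
have indep j : ~~ (f j && f (ordS j)).
  by apply/negP => /andP[/(hardcore_adj hs (adj_ordS2 i j))/negP].
have [c fE] := alternating_parity (cycle_indep_extremal indep max_i).
exists (c (+) odd i); apply/forallP => j; rewrite ffunE /= -/(f j) fE oddD.
by case: (c); case: (odd i); case: (odd j).
Qed.

Lemma empty_near_full_row b s i j w : hardcore s -> full_row b s i ->
  ~~ checker b w -> adj w (i, j) -> ~~ s w.
Proof.
move=> hs full nontarget adj_w.
have occupied : s (i, j).
  by apply: (implyP (forallP full j)); rewrite (checker_adj b adj_w) nontarget.
by rewrite adj_sym in adj_w; apply: hardcore_adj hs adj_w occupied.
Qed.

Lemma full_rows_checker b s : hardcore s -> (forall i, full_row b s i) -> s = checker b.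
Proof.
move=> hs full; apply/ffunP => -[i j].
case target: (checker b (i, j)); first exact: (implyP (forallP (full i) j)).
by apply/negbTE/(empty_near_full_row hs (full i)); [rewrite target | apply: adj_ordS2].
Qed.

Definition update s v c : config L := [ffun w => if w == v then c else s w].

Lemma update_same s v : update s v (s v) = s.
Proof. by apply/ffunP => w; rewrite ffunE; case: eqP => [->|]. Qed.

Lemma one_flip_update s v c : s v != c -> one_flip s (update s v c).
Proof.
move=> flip; rewrite /one_flip; suff -> : [set w | s w != update s v c w] = [set v] by rewrite cards1.
by apply/setP => w; rewrite !inE ffunE; case: (w =P v) => [->|]; rewrite ?eqxx.
Qed.

Lemma card_update s v c :
  #|[set w | update s v c w]| + s v = #|[set w | s w]| + c.
Proof.
rewrite (cardsD1 v [set w | update s v c w]) (cardsD1 v [set w | s w]) !inE ffunE eqxx.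
have -> : [set w | update s v c w] :\ v = [set w | s w] :\ v.
  by apply/setP => w; rewrite !inE ffunE; case: eqP.
lia.
Qed.

Lemma Hc_update s v c : Hc (update s v c) = (Hc s + (s v : nat)%:Z - (c : nat)%:Z)%R.
Proof. by rewrite /Hc; have := card_update s v c; lia. Qed.

Lemma hardcore_remove s v : hardcore s -> hardcore (update s v false).
Proof.
move=> /hardcoreP hs; apply/hardcoreP => u w /hs; rewrite !ffunE.
by case: eqP; case: eqP; rewrite ?andbF.
Qed.

Lemma hardcore_add s v : hardcore s -> (forall w, adj v w -> ~~ s w) ->
  hardcore (update s v true).
Proof.
move=> /hardcoreP hs empty; apply/hardcoreP => u w adj_uw; rewrite !ffunE.
case: (u =P v) => [eu|_]; case: (w =P v) => [ew|_].
- by move: adj_uw; rewrite eu ew (negbTE (adj_irrefl v)).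
- by rewrite eu in adj_uw; rewrite (negbTE (empty _ adj_uw)).
- by rewrite ew adj_sym in adj_uw; rewrite (negbTE (empty _ adj_uw)).
- exact: hs.
Qed.

Definition mismatch b s := #|[set v | s v != checker b v]|.

Lemma mismatch_update b s v :
  mismatch b (update s v (checker b v)) + (s v != checker b v) = mismatch b s.
Proof.
rewrite /mismatch [RHS](cardsD1 v) inE addnC.
suff -> : [set w | update s v (checker b v) w != checker b w] =
          [set w | s w != checker b w] :\ v by [].
by apply/setP => w; rewrite !inE ffunE; case: (w =P v) => [->|]; rewrite ?eqxx.
Qed.

Lemma full_row_update b s i v c : full_row b s i -> checker b v ==> c ->
  full_row b (update s v c) i.
Proof.
move=> full target_c; apply/forallP => j; rewrite [update _ _ _ _]ffunE.
by case: ((i, j) =P v) => [->|_] //; exact: (forallP full j).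
Qed.

Lemma growth_site b s r : hardcore s -> full_row b s r -> ~~ full_row b s (ordS r) ->
  exists j, [/\ checker b (ordS r, j), ~~ s (ordS r, j) &
    forall w, adj (ordS r, j) w -> w != (ordS (ordS r), j) -> ~~ s w].
Proof.
move=> hs full /forallPn[j]; rewrite negb_imply => /andP[target empty_x].
exists j; split=> // -[w1 w2] adj_xw not_y.
have nontarget : ~~ checker b (w1, w2) by rewrite (checker_adj b adj_xw) target.
move: adj_xw not_y; rewrite /adj !cyc_adjE /= => /orP[/andP[/eqP ew1 _] _ |].
  subst w1; apply: (empty_near_full_row (j := w2) hs full nontarget).
  by rewrite adj_sym; apply: adj_ordS1.
move=> /andP[/eqP ew2 /orP[/eqP -> | /eqP /ordS_inj ew1]]; subst w2; first by rewrite eqxx.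
by subst w1 => _; apply: (empty_near_full_row (j := ordS j) hs full nontarget); apply: adj_ordS2.
Qed.

Lemma reachable_clear_fill s x y M : hardcore s -> ~~ s x -> x != y ->
  (forall w, adj x w -> w != y -> ~~ s w) -> (Hc s + 1 <= M)%R ->
  [/\ reachable_below M s (update (update s y false) x true),
       hardcore (update (update s y false) x true) &
       (Hc (update (update s y false) x true) <= Hc s)%R].
Proof.
move=> hs empty_x ne_xy empty_nbrs le_M.
set t := update s y false; set s' := update t x true.
have hs_t : hardcore t by apply: hardcore_remove.
have t_x : t x = false by rewrite ffunE (negbTE ne_xy); apply/negbTE.
have hs' : hardcore s'.
  apply: hardcore_add => // w adj_xw; rewrite ffunE.
  by case: (w =P y) => [//|/eqP]; apply: empty_nbrs.
have Hc_t : Hc t = (Hc s + (s y : nat)%:Z)%R by rewrite Hc_update subr0.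
have Hc_s' : Hc s' = (Hc t - 1)%R by rewrite Hc_update t_x addr0.
have le_s : (Hc s <= M)%R by apply: le_trans _ le_M; rewrite lerDl.
have le_t : (Hc t <= M)%R by apply: le_trans _ le_M; rewrite Hc_t lerD2l lez_nat leq_b1.
have le_s's : (Hc s' <= Hc s)%R by rewrite Hc_s' Hc_t -addrA gerDl subr_le0 lez_nat leq_b1.
split=> //; apply: (@reachable_below_trans _ _ _ t).
  case s_y : (s y).
    by apply: reachable_below_flip => //; apply: one_flip_update; rewrite s_y.
  by rewrite /t -s_y update_same; apply: reachable_below_refl.
apply: reachable_below_flip => //; first by apply: one_flip_update; rewrite t_x.
exact: le_trans le_s's le_s.
Qed.

Lemma greedy_step b s r0 M : hardcore s -> full_row b s r0 -> s != checker b ->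
  (Hc s + 1 <= M)%R ->
  exists2 s', reachable_below M s s' &
    [/\ hardcore s', full_row b s' r0, mismatch b s' < mismatch b s & (Hc s' <= Hc s)%R].
Proof.
move=> hs full0 not_checker le_M.
have [r1 not_full1] : exists r1, ~~ full_row b s r1.
  apply/existsP; apply: contraNT not_checker; rewrite negb_exists => /forallP full.
  by apply/eqP/full_rows_checker => // i; apply/negbNE/full.
have [r full_r not_full_next] := cycle_boundary full0 not_full1.
have [j [target_x empty_x empty_nbrs]] := growth_site hs full_r not_full_next.
set x := (ordS r, j) in target_x empty_x empty_nbrs.
set y := (ordS (ordS r), j) in empty_nbrs.
have nontarget_y : checker b y = false.
  by rewrite (checker_adj b (adj_ordS1 (ordS r) j)) target_x.
have ne_xy : x != y by apply: contraTneq target_x => ->; rewrite nontarget_y.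
have [reach_s' hs' le_Hc] := reachable_clear_fill hs empty_x ne_xy empty_nbrs le_M.
exists (update (update s y false) x true) => //; split=> //.
- apply: full_row_update; last by rewrite implybT.
  by apply: full_row_update; rewrite ?nontarget_y.
- rewrite -(mismatch_update b s y) nontarget_y -(mismatch_update b (update s y false) x) target_x.
  by rewrite ffunE (negbTE ne_xy) (negbTE empty_x) addn1 ltnS leq_addr.
Qed.

Lemma reachable_checker b n s r M : mismatch b s <= n -> hardcore s ->
  full_row b s r -> (Hc s + 1 <= M)%R -> reachable_below M s (checker b).
Proof.
elim: n s => [|n IH] s le_mis hs full le_M.
all: have [<- | not_checker] := eqVneq s (checker b);
  first by apply: reachable_below_refl => //; apply: le_trans _ le_M; rewrite lerDl.
all: have [s' reach_s' [hs' full' lt_mis le_Hc]] := greedy_step hs full not_checker le_M.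
  by move: (leq_trans lt_mis le_mis).
apply: reachable_below_trans reach_s' (IH _ _ hs' full' _).
  by rewrite -ltnS (leq_trans lt_mis le_mis).
by apply: le_trans _ le_M; rewrite lerD2r.
Qed.

End Torus.

Local Open Scope ring_scope.

Theorem lemma4p1 (L : nat) (hLeven : ~~ odd L) (hL6 : (6 <= L)%N)
  (hPhi : Phi_eo_value L) (s : config L) (hs : hardcore s)
  (hD : DeltaH s < L%:Z) :
  (exists p, (path_from_to s p (conf_e L) \/ path_from_to s p (conf_o L)) /\
             height s p <= Hc s + 1)
  /\ (C_e s \/ C_o s).
Proof.
have [i max_i] := exists_max_row hLeven hs hD.
have [b full_i] := max_row_full hs max_i.
have [p [path_p height_p]] := reachable_checker hLeven (leqnn _) hs full_i (lexx (Hc s + 1)).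
have below_Phi_eo q : path_from_to (conf_e L) q (conf_o L) -> height s p < height (conf_e L) q.
  case: hPhi => _ /(_ q) lower_bound /lower_bound; move: height_p hD; rewrite /DeltaH; lia.
rewrite /C_e /C_o /Phi_lt_Phi_eo (conf_eE L) (conf_oE L) in below_Phi_eo *.
split; first by exists p; split=> //; case: (b) path_p; [left | right].
by case: (b) path_p => path_p; [left | right]; split=> //; exists p.
Qed.
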